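(* Let $K$ be a field and let $S=\langle x_1,\ldots,x_n\rangle$ be a semigroup of skew type that satisfies the cyclic condition (C) and such that $S=\{x_1^{a_1}\cdots x_n^{a_n}\mid a_i\ge 0\}$. Then there exists $p\ge 1$ such that, with $A=\langle x_1^p,\ldots,x_n^p\rangle$ (a commutative submonoid of $S$) and $C=\{x_1^{i_1}\cdots x_n^{i_n}\mid 0\le i_j<p\}$, we have $S=\bigcup_{c\in C}cA$ and $cA=Ac$ for every $c\in C$; in particular $K[S]$ is a finite left and right module over the commutative subring $K[A]$. Consequently $K[S]$ is a right and left noetherian PI algebra.
   Context: A semigroup of skew type is a monoid $S$ with a monoid presentation $S=\langle x_1,\ldots,x_n \mid x_ix_j=x_kx_l\rangle$ consisting of $\binom{n}{2}$ relations, each of the form $x_ix_j=x_kx_l$ with $i\neq j$, $k\neq l$, such that every word $x_px_q$ with $p\neq q$ appears (as one side) in exactly one of the relations; $X=\{x_1,\ldots,x_n\}$. $S$ satisfies the cyclic condition (C) if for every pair $x,y\in X$ there exist elements $x=z_1,z_2,\ldots,z_k$ and $y'$ in $X$ such that in $S$: $yz_1=z_2y'$, $\ldots$, $yz_{k-1}=z_ky'$, $yz_k=xy'$. $K[S]$ denotes the monoid algebra; $\langle Z\rangle$ denotes the submonoid generated by $Z$. *)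

From HB Require Import structures.
From mathcomp Require Import all_boot all_order all_algebra.
Set Implicit Arguments. Unset Strict Implicit. Unset Printing Implicit Defensive.
Import GRing.Theory.
Local Open Scope ring_scope.

(* A relation x_i x_j = x_k x_l is encoded as ((i, j), (k, l)). *)
Definition relation n := (('I_n * 'I_n) * ('I_n * 'I_n))%type.

Inductive cong (n : nat) (rels : seq (relation n)) : seq 'I_n -> seq 'I_n -> Prop :=
| cong_refl w : cong rels w w
| cong_sym u v : cong rels u v -> cong rels v u
| cong_trans u v w : cong rels u v -> cong rels v w -> cong rels u w
| cong_step (u v : seq 'I_n) (r : relation n) : r \in rels ->
    cong rels (u ++ [:: r.1.1; r.1.2] ++ v) (u ++ [:: r.2.1; r.2.2] ++ v).

Definition skew_type (n : nat) (rels : seq (relation n)) : Prop :=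
  [/\ size rels = 'C(n, 2),
      all (fun r : relation n => (r.1.1 != r.1.2) && (r.2.1 != r.2.2)) rels &
      forall p q : 'I_n, p != q ->
        count (fun r : relation n => (r.1 == (p, q)) || (r.2 == (p, q))) rels = 1%N].

Definition eval_word (M : Type) (mul : M -> M -> M) (one : M) (n : nat)
  (x : 'I_n -> M) (w : seq 'I_n) : M := foldr (fun i acc => mul (x i) acc) one w.

Definition is_monoid (M : Type) (mul : M -> M -> M) (one : M) : Prop :=
  [/\ associative mul, left_id one mul & right_id one mul].

Definition presents (M : Type) (mul : M -> M -> M) (one : M) (n : nat)
  (rels : seq (relation n)) (x : 'I_n -> M) : Prop :=
  (forall s : M, exists w : seq 'I_n, s = eval_word mul one x w) /\
  (forall u v : seq 'I_n, eval_word mul one x u = eval_word mul one x v <-> cong rels u v).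

(* Cyclic condition (C), with z_1 = z 0, ..., z_k = z (k-1), y = x j, x = x i. *)
Definition cyclic_condition (M : Type) (mul : M -> M -> M) (n : nat)
  (x : 'I_n -> M) : Prop :=
  forall i j : 'I_n, exists (k : nat) (z : nat -> 'I_n) (y' : 'I_n),
    [/\ (0 < k)%N, z 0%N = i,
        (forall t : nat, (t.+1 < k)%N -> mul (x j) (x (z t)) = mul (x (z t.+1)) (x y')) &
        mul (x j) (x (z k.-1)) = mul (x i) (x y')].

Definition ordered_word (n : nat) (a : 'I_n -> nat) : seq 'I_n :=
  flatten [seq nseq (a i) i | i <- enum 'I_n].

(* R together with e : M -> R is the monoid algebra K[M]: a K-algebra in which
   e is a monoid morphism whose image (indexed by M) is a K-basis. *)
Definition is_monoid_algebra (K : fieldType) (R : algType K) (M : Type)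
  (mul : M -> M -> M) (one : M) (e : M -> R) : Prop :=
  [/\ e one = 1,
      (forall a b, e (mul a b) = e a * e b),
      (forall r : R, exists (m : nat) (f : 'I_m -> M) (k : 'I_m -> K),
          r = \sum_(i < m) k i *: e (f i)) &
      (forall (m : nat) (f : 'I_m -> M) (k : 'I_m -> K), injective f ->
          \sum_(i < m) k i *: e (f i) = 0 -> forall i, k i = 0)].

Definition span_of (K : fieldType) (R : algType K) (M : Type) (e : M -> R)
  (A : M -> Prop) (r : R) : Prop :=
  exists (m : nat) (f : 'I_m -> M) (k : 'I_m -> K),
    (forall i, A (f i)) /\ r = \sum_(i < m) k i *: e (f i).

Definition finite_left_module (R : pzRingType) (B : R -> Prop) : Prop :=
  exists (m : nat) (g : 'I_m -> R), forall r : R,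
    exists al : 'I_m -> R, (forall i, B (al i)) /\ r = \sum_(i < m) al i * g i.

Definition finite_right_module (R : pzRingType) (B : R -> Prop) : Prop :=
  exists (m : nat) (g : 'I_m -> R), forall r : R,
    exists al : 'I_m -> R, (forall i, B (al i)) /\ r = \sum_(i < m) g i * al i.

Definition right_ideal (R : pzRingType) (I : R -> Prop) : Prop :=
  [/\ I 0, (forall a b, I a -> I b -> I (a + b)) & (forall a r, I a -> I (a * r))].

Definition left_ideal (R : pzRingType) (I : R -> Prop) : Prop :=
  [/\ I 0, (forall a b, I a -> I b -> I (a + b)) & (forall a r, I a -> I (r * a))].

Definition right_noetherian (R : pzRingType) : Prop :=
  forall I : nat -> R -> Prop, (forall k, right_ideal (I k)) ->
    (forall k a, I k a -> I k.+1 a) ->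
    exists N : nat, forall k, (N <= k)%N -> forall a, I k a -> I N a.

Definition left_noetherian (R : pzRingType) : Prop :=
  forall I : nat -> R -> Prop, (forall k, left_ideal (I k)) ->
    (forall k a, I k a -> I k.+1 a) ->
    exists N : nat, forall k, (N <= k)%N -> forall a, I k a -> I N a.

(* R satisfies a nonzero polynomial identity: a nonzero element f of the free
   algebra K<X_0..X_{m-1}> (coefficient function on words, finite support s)
   vanishing under every substitution X_i := a i in R. *)
Definition PI_algebra (K : fieldType) (R : algType K) : Prop :=
  exists (m : nat) (s : seq (seq 'I_m)) (f : seq 'I_m -> K),
    [/\ uniq s, (forall w, f w != 0 -> w \in s), (exists w, f w != 0) &
        forall a : 'I_m -> R, \sum_(w <- s) f w *: \prod_(i <- w) a i = 0].

From HB Require Import structures.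
From mathcomp Require Import all_boot all_order all_algebra all_fingroup.
From mathcomp Require Import mpoly.
From Stdlib Require Import Classical ClassicalEpsilon.
Set Implicit Arguments. Unset Strict Implicit. Unset Printing Implicit Defensive.
Import Order.TTheory GRing.Theory.

(* For each pair (i, j), condition (C) yields k > 0 and an index T i j with
   x_j^k x_i = x_i x_(T i j)^k, and the skew-type presentation forces j |-> T i j
   to be a permutation.  If p is divisible by all these k and by the orders of
   these permutations, then x_j^p x_i = x_i x_(T i j)^p and the x_j^p commute, so
   A is a commutative image of N^n normalised by S, and S = C A with C finite.
   Hence K[S] is a finite module over the image of a polynomial ring: it is
   noetherian by the leading-monomial argument (Dickson's lemma), and it
   satisfies a standard identity because each element acts on the finitely many
   module generators through a matrix over a commutative ring, compatibly with
   sums and products. *)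

Lemma exists_minimal (Q : nat -> Prop) :
  (exists k, Q k) -> exists k, Q k /\ forall j, Q j -> k <= j.
Proof.
case=> k; elim/ltn_ind: k => k IH Qk.
have [[j ltjk Qj] | no_smaller] := classic (exists2 j, j < k & Q j); first exact: IH Qj.
exists k; split => // j Qj; rewrite leqNgt; apply/negP => ltjk.
by apply: no_smaller; exists j.
Qed.

Lemma exists_tail_argmin (a : nat -> nat) (N : nat) :
  exists i, N <= i /\ forall j, N <= j -> a i <= a j.
Proof.
have [v [[i Ni <-] min_v]] := @exists_minimal (fun v => exists2 i, N <= i & a i = v)
  (ex_intro _ (a N) (ex_intro2 _ _ N (leqnn N) erefl)).
by exists i; split => // j Nj; apply: min_v; exists j.
Qed.

Lemma nondecreasing_subsequence (a : nat -> nat) :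
  exists2 phi : nat -> nat, {homo phi : s s' / s < s'} &
    {homo (fun s => a (phi s)) : s s' / s <= s'}.
Proof.
pose argmin N := proj1_sig (constructive_indefinite_description _ (exists_tail_argmin a N)).
have argminP N : N <= argmin N /\ forall j, N <= j -> a (argmin N) <= a j.
  exact: proj2_sig (constructive_indefinite_description _ (exists_tail_argmin a N)).
pose phi := fix phi s := if s is s'.+1 then argmin (phi s').+1 else argmin 0.
pose lower s := if s is s'.+1 then (phi s').+1 else 0.
have phiE s : phi s = argmin (lower s) by case: s.
have phiS s : phi s < phi s.+1 by case: (argminP (phi s).+1).
exists phi; first exact: homo_ltn ltn_trans phiS.
apply: homo_leq => [//|y x z|s]; first exact: leq_trans.
rewrite [phi s]phiE; case: (argminP (lower s)) => lower_le; apply.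
by rewrite (leq_trans lower_le) // -phiE ltnW.
Qed.

Lemma dickson_subsequence (k : nat) (u : nat -> nat -> nat) :
  exists2 phi : nat -> nat, {homo phi : s s' / s < s'} &
    forall i, i < k -> {homo (fun s => u (phi s) i) : s s' / s <= s'}.
Proof.
elim: k => [|k [phi phi_lt phi_le]]; first by exists id.
have [psi psi_lt psi_le] := nondecreasing_subsequence (fun s => u (phi s) k).
have psi_le' : {homo psi : s s' / s <= s'}.
  by move=> s s'; rewrite leq_eqVlt => /predU1P [-> //|/psi_lt/ltnW].
exists (fun s => phi (psi s)) => [s s' /psi_lt/phi_lt //|i].
rewrite ltnS leq_eqVlt => /predU1P [-> //|lt_ik] s s' /psi_le'.
exact: phi_le.
Qed.

Lemma dickson (k : nat) (u : nat -> 'X_{1..k}) :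
  exists s s', s < s' /\ (u s <= u s')%MM.
Proof.
have [phi phi_lt phi_le] := dickson_subsequence k (fun s i => oapp (u s) 0 (insub i)).
exists (phi 0), (phi 1); split; first exact: phi_lt.
by apply/mnm_lepP => i; have := phi_le i (ltn_ord i) 0 1 isT; rewrite /= valK.
Qed.

Section LinearExtension.
Local Open Scope ring_scope.
Variables (K : fieldType) (V : lmodType K) (D : nat) (Psi : 'X_{1..D} -> V).

Definition mlin (f : {mpoly K[D]}) : V := \sum_(mu <- msupp f) f@_mu *: Psi mu.

Lemma mlinE_uniq s f : uniq s -> {subset msupp f <= s} ->
  mlin f = \sum_(mu <- s) f@_mu *: Psi mu.
Proof.
move=> s_uniq supp_s; rewrite (bigID (mem (msupp f))) /=.
rewrite [X in _ + X]big1 ?addr0 => [|mu]; last first.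
  by rewrite mcoeff_msupp negbK => /eqP ->; rewrite scale0r.
rewrite -big_filter; apply/perm_big/uniq_perm; rewrite ?filter_uniq ?msupp_uniq //.
by move=> mu; rewrite mem_filter; case: (boolP (mu \in msupp f)) => // /supp_s ->.
Qed.

Lemma mlin0 : mlin 0 = 0.
Proof. by rewrite /mlin msupp0 big_nil. Qed.

Lemma mlinD f g : mlin (f + g) = mlin f + mlin g.
Proof.
pose s := undup (msupp f ++ msupp g ++ msupp (f + g)).
rewrite !(@mlinE_uniq s) ?undup_uniq //.
- by rewrite -big_split; apply: eq_bigr => mu _; rewrite mcoeffD scalerDl.
all: by move=> mu mu_h; rewrite mem_undup !mem_cat mu_h ?orbT.
Qed.

Lemma mlinZ k f : mlin (k *: f) = k *: mlin f.
Proof.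
rewrite (@mlinE_uniq (msupp f)) ?msupp_uniq //; last exact: msuppZ_le.
by rewrite scaler_sumr; apply: eq_bigr => mu _; rewrite mcoeffZ scalerA.
Qed.

Lemma mlin_sum (T : Type) (r : seq T) (P : pred T) (F : T -> {mpoly K[D]}) :
  mlin (\sum_(t <- r | P t) F t) = \sum_(t <- r | P t) mlin (F t).
Proof. exact: (big_morph mlin mlinD mlin0). Qed.

Lemma mlinX mu : mlin 'X_[mu] = Psi mu.
Proof. by rewrite /mlin msuppX big_seq1 mcoeffX eqxx scale1r. Qed.

End LinearExtension.

Section MultiplicativeExtension.
Local Open Scope ring_scope.
Variables (K : fieldType) (R : algType K) (D : nat) (Psi : 'X_{1..D} -> R).
Hypothesis Psi0 : Psi 0%MM = 1.
Hypothesis PsiD : forall mu nu, Psi (mu + nu)%MM = Psi mu * Psi nu.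

Lemma mlin1 : mlin Psi 1 = 1.
Proof. by rewrite -mpolyX0 mlinX Psi0. Qed.

Lemma mlinM f g : mlin Psi (f * g) = mlin Psi f * mlin Psi g.
Proof.
rewrite {1}(mpolyE f) {1}(mpolyE g) mulr_suml mlin_sum [mlin _ f]/mlin mulr_suml.
apply: eq_bigr => mu _; rewrite mulr_sumr mlin_sum [mlin _ g]/mlin mulr_sumr.
apply: eq_bigr => nu _.
rewrite -scalerAl -scalerAr !mlinZ -mpolyXD mlinX PsiD.
by rewrite -scalerAl -scalerAr.
Qed.

End MultiplicativeExtension.

Lemma ascending_chain_le (T : Type) (P : nat -> T -> Prop) :
  (forall t x, P t x -> P t.+1 x) -> forall t t', t <= t' -> forall x, P t x -> P t' x.
Proof.
move=> P_incr t t'; elim: t' => [|t' IH]; first by rewrite leqn0 => /eqP ->.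
rewrite leq_eqVlt => /predU1P [-> // | /IH P_t x /P_t]; exact: P_incr.
Qed.

Definition subspace (K : fieldType) (V : lmodType K) (P : V -> Prop) :=
  [/\ P 0%R, forall u v, P u -> P v -> P (u + v)%R & forall k u, P u -> P (k *: u)%R].

Section LeadingMonomials.
Local Open Scope ring_scope.
Variables (K : fieldType) (D : nat).

Definition mleads (F : {mpoly K[D]} -> Prop) (mu : 'X_{1..D}) : Prop :=
  exists f, [/\ F f, f != 0 & mlead f = mu].

Lemma subspace_of_mleads (F F' : {mpoly K[D]} -> Prop) :
  subspace F -> subspace F' -> (forall f, F f -> F' f) ->
  (forall mu, mleads F' mu -> mleads F mu) -> forall f, F' f -> F f.
Proof.
case=> F0 FD FZ [_ F'D F'Z] FF' leadsF.
(* Cancel the leading term against an element of F and induct on the monomial order. *)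
suff key mu f : F' f -> mlead f = mu -> F f by move=> f F'f; exact: key.
elim/(well_founded_induction (@ltom_wf D)): mu f => mu IH f F'f lead_f.
have [-> // | nz_f] := eqVneq f 0.
have [g [Fg nz_g lead_g]] : mleads F mu by apply: leadsF; exists f.
pose h := f - (mleadc f / mleadc g) *: g.
have F'h : F' h by apply: F'D => //; rewrite -scaleN1r; apply/F'Z/F'Z/FF'.
suff Fh : F h by rewrite -(subrK ((mleadc f / mleadc g) *: g) f); apply/FD/FZ.
have [-> // | nz_h] := eqVneq h 0.
apply: (IH (mlead h)) => //; rewrite lt_neqAle; apply/andP; split.
  apply: contraTneq (mlead_supp nz_h) => ->.
  have nz_gmu : g@_mu != 0 by rewrite -lead_g mleadc_eq0.
  by rewrite mcoeff_msupp mcoeffB mcoeffZ lead_f lead_g mulfVK ?subrr ?eqxx.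
apply: le_trans (mleadB_le _ _) _; rewrite leUx -lead_f lexx /=.
by apply: le_trans (mleadZ_le _ _) _; rewrite lead_g lead_f.
Qed.

End LeadingMonomials.

Lemma monomial_chain_stable (D : nat) (L : nat -> 'X_{1..D} -> Prop) :
  (forall t mu, L t mu -> L t.+1 mu) ->
  (forall t t' mu mu', L t mu -> L t' mu' -> (mu <= mu')%MM -> L t mu') ->
  exists N, forall t, N <= t -> forall mu, L t mu -> L N mu.
Proof.
move=> L_incr L_up; apply: NNPP => unstable.
(* Otherwise pick, at increasing times, monomials missing from the earlier stage;
   Dickson's lemma makes one of them dominate an earlier one, so by upward
   closure it was already present at the stage it was chosen to avoid. *)
have escape N : exists tm : nat * 'X_{1..D}, [/\ N <= tm.1, L tm.1 tm.2 & ~ L N tm.2].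
  apply: NNPP => no_escape; apply: unstable; exists N => t le_Nt mu Lmu.
  by apply: NNPP => notL; apply: no_escape; exists (t, mu).
pose next N := proj1_sig (constructive_indefinite_description _ (escape N)).
have nextP N : [/\ N <= (next N).1, L (next N).1 (next N).2 & ~ L N (next N).2].
  exact: proj2_sig (constructive_indefinite_description _ (escape N)).
pose time := fix time s := if s is s'.+1 then (next (time s')).1 else 0.
pose mu s := (next (time s)).2.
have L_time s : L (time s.+1) (mu s) by case: (nextP (time s)).
have time_mono : {homo time : s s' / s <= s'}.
  apply: homo_leq => [//|y x z|s]; first exact: leq_trans.
  by case: (nextP (time s)).
have [s [s' [lt_ss' le_mu]]] := dickson mu.
case: (nextP (time s')) => _ _; apply.
apply: (ascending_chain_le L_incr (time_mono _ _ lt_ss')).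
exact: L_up (L_time s) (L_time s') le_mu.
Qed.

Section FinitelyGeneratedModule.
Local Open Scope ring_scope.
Variables (K : fieldType) (V : lmodType K) (m d : nat) (G : 'I_m -> V)
  (act : 'X_{1..d} -> V -> V).
Hypothesis actD : forall nu u v, act nu (u + v) = act nu u + act nu v.
Hypothesis actZ : forall nu k u, act nu (k *: u) = k *: act nu u.
Hypothesis actM : forall nu1 nu2 u, act (nu1 + nu2)%MM u = act nu1 (act nu2 u).
Hypothesis act_span : forall v, exists (mm : nat) (c : 'I_mm -> 'I_m)
  (nu : 'I_mm -> 'X_{1..d}) (k : 'I_mm -> K),
  v = \sum_(t < mm) k t *: act (nu t) (G (c t)).

Let act0 nu : act nu 0 = 0.
Proof. by rewrite -(scale0r 0) actZ !scale0r. Qed.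

Let act_sum nu (T : Type) (r : seq T) (F : T -> V) :
  act nu (\sum_(t <- r) F t) = \sum_(t <- r) act nu (F t).
Proof. exact: (big_morph (act nu) (actD nu) (act0 nu)). Qed.

(* The free module K[X_1..X_d]^m is encoded in K[Y_1..Y_m, X_1..X_d] as the
   span of the monomials Y_c X^nu, which [eval_mono] sends to X^nu . G c. *)
Definition basis_mono (c : 'I_m) (nu : 'X_{1..d}) : 'X_{1..m + d} :=
  [multinom match split i with inl c' => nat_of_bool (c' == c) | inr j => nu j end
  | i < m + d].

Definition var_mono (dl : 'X_{1..d}) : 'X_{1..m + d} :=
  [multinom match split i with inl _ => 0%N | inr j => dl j end | i < m + d].

Definition var_part (mu : 'X_{1..m + d}) : 'X_{1..d} := [multinom mu (rshift m j) | j < d].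

Definition eval_mono (mu : 'X_{1..m + d}) : V :=
  \sum_(c < m) (mu (lshift d c))%:R *: act (var_part mu) (G c).

Lemma basis_mono_lshift c c' nu : basis_mono c nu (lshift d c') = (c' == c).
Proof. by rewrite mnmE (unsplitK (inl c')). Qed.

Lemma var_part_basis_mono c nu : var_part (basis_mono c nu) = nu.
Proof. by apply/mnmP => j; rewrite !mnmE (unsplitK (inr j)). Qed.

Lemma eval_basis_mono c nu : eval_mono (basis_mono c nu) = act nu (G c).
Proof.
rewrite /eval_mono (bigD1 c) //= big1 => [|c' /negbTE neq_c'c].
  by rewrite basis_mono_lshift eqxx var_part_basis_mono scale1r addr0.
by rewrite basis_mono_lshift neq_c'c scale0r.
Qed.

Lemma var_mono_basis_mono dl c nu :
  (var_mono dl + basis_mono c nu)%MM = basis_mono c (dl + nu)%MM.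
Proof.
by apply/mnmP => i; rewrite mnmDE !mnmE; case: (split i) => //= j; rewrite mnmDE.
Qed.

Lemma basis_mono_le c c' nu nu' :
  (basis_mono c nu <= basis_mono c' nu')%MM -> c = c' /\ (nu <= nu')%MM.
Proof.
move/mnm_lepP => le_mono; split.
  by have := le_mono (lshift d c); rewrite !basis_mono_lshift eqxx; case: eqP.
by apply/mnm_lepP => j; have := le_mono (rshift m j); rewrite !mnmE (unsplitK (inr j)).
Qed.

Definition basis_supported (f : {mpoly K[m + d]}) :=
  forall mu, mu \in msupp f -> exists c nu, mu = basis_mono c nu.

Lemma mlin_var_mono dl f : basis_supported f ->
  mlin eval_mono ('X_[var_mono dl] * f) = act dl (mlin eval_mono f).
Proof.
move=> f_basis; rewrite {1}(mpolyE f) mulr_sumr mlin_sum [mlin _ f]/mlin act_sum.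
rewrite !big_seq; apply: eq_bigr => mu /f_basis [c [nu ->]].
by rewrite -scalerAr -mpolyXD mlinZ mlinX actZ var_mono_basis_mono !eval_basis_mono actM.
Qed.

Lemma mlin_basis_surj v : exists2 f, basis_supported f & mlin eval_mono f = v.
Proof.
have [mm [c [nu [k ->]]]] := act_span v.
exists (\sum_(t < mm) k t *: 'X_[basis_mono (c t) (nu t)]).
  move=> mu /msupp_sum_le /flattenP [s /mapP [t _ ->]] /msuppZ_le.
  by rewrite msuppX inE => /eqP ->; exists (c t), (nu t).
by rewrite mlin_sum; apply: eq_bigr => t _; rewrite mlinZ mlinX eval_basis_mono.
Qed.

Definition act_submodule (J : V -> Prop) := subspace J /\ forall nu u, J u -> J (act nu u).

Definition pullback (J : V -> Prop) (f : {mpoly K[m + d]}) :=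
  basis_supported f /\ J (mlin eval_mono f).

Lemma pullback_subspace J : subspace J -> subspace (pullback J).
Proof.
case=> J0 JD JZ; split.
- by split; [move=> mu; rewrite msupp0 | rewrite mlin0].
- move=> f g [f_basis Jf] [g_basis Jg]; split; last by rewrite mlinD; apply: JD.
  by move=> mu /msuppD_le; rewrite mem_cat => /orP [/f_basis | /g_basis].
- move=> k f [f_basis Jf]; split; last by rewrite mlinZ; apply: JZ.
  by move=> mu /msuppZ_le /f_basis.
Qed.

Lemma pullback_var_mono J dl f : act_submodule J ->
  pullback J f -> pullback J ('X_[var_mono dl] * f).
Proof.
move=> [_ J_act] [f_basis Jf]; split; last by rewrite mlin_var_mono //; apply: J_act.
move=> mu /msuppM_le /allpairsP [[mu1 mu2] /= [+ /f_basis [c [nu ->]] ->]].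
by rewrite msuppX inE => /eqP ->; exists c, (dl + nu)%MM; apply: var_mono_basis_mono.
Qed.

Lemma mleads_pullback J mu : mleads (pullback J) mu -> exists c nu, mu = basis_mono c nu.
Proof. by case=> f [[f_basis _] nz_f <-]; apply/f_basis/mlead_supp. Qed.

Lemma mleads_pullback_up J J' mu mu' : act_submodule J ->
  mleads (pullback J) mu -> mleads (pullback J') mu' -> (mu <= mu')%MM ->
  mleads (pullback J) mu'.
Proof.
move=> J_sub lead_mu lead_mu'.
have [c [nu mu_eq]] := mleads_pullback lead_mu.
have [c' [nu' mu'_eq]] := mleads_pullback lead_mu'.
rewrite mu_eq mu'_eq => /basis_mono_le [<- le_nu].
have [f [Jf nz_f lead_f]] := lead_mu.
have nz_X : 'X_[var_mono (nu' - nu)] != 0 :> {mpoly K[m + d]}.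
  by rewrite -msupp_eq0 msuppX.
exists ('X_[var_mono (nu' - nu)] * f); split; first exact: pullback_var_mono.
  by rewrite mulf_eq0 negb_or nz_X.
by rewrite mleadM // mleadXm lead_f mu_eq var_mono_basis_mono submK.
Qed.

Theorem act_submodule_chain_stable (J : nat -> V -> Prop) :
  (forall t, act_submodule (J t)) -> (forall t v, J t v -> J t.+1 v) ->
  exists N, forall t, (N <= t)%N -> forall v, J t v -> J N v.
Proof.
move=> J_sub J_incr.
have pullback_incr t f : pullback (J t) f -> pullback (J t.+1) f by case=> ? /J_incr.
have [N stable] : exists N, forall t, (N <= t)%N ->
    forall mu, mleads (pullback (J t)) mu -> mleads (pullback (J N)) mu.
  apply: monomial_chain_stable => [t mu [f [/pullback_incr Jf nz_f <-]] | t t' mu mu'].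
    by exists f.
  exact: mleads_pullback_up.
exists N => t le_Nt v; have [f f_basis <-] := mlin_basis_surj v; move=> Jf.
suff [] : pullback (J N) f by [].
apply: (subspace_of_mleads (pullback_subspace (J_sub N).1) (pullback_subspace (J_sub t).1)).
- exact: (ascending_chain_le (P := fun t => pullback (J t)) pullback_incr le_Nt).
- exact: stable.
- by split.
Qed.

End FinitelyGeneratedModule.

Section StandardPolynomial.
Local Open Scope ring_scope.

Definition stdp (R : pzRingType) (N : nat) (a : 'I_N -> R) : R :=
  \sum_(s : 'S_N) (-1) ^+ s * \prod_(i < N) a (s i).

Lemma stdp_eq0_of_span (C : comNzRingType) (A : algType C) (J : finType)
    (b : J -> A) (N : nat) :
  (#|J| < N)%N -> (forall a : A, exists lam : J -> C, a = \sum_j lam j *: b j) ->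
  forall a : 'I_N -> A, stdp a = 0.
Proof.
move=> small span a.
have [lam a_eq] : exists lam : 'I_N -> J -> C, forall i, a i = \sum_j lam i j *: b j.
  exact: (fin_all_exists (fun i => span (a i))).
have prod_expand (s : 'S_N) : \prod_(i < N) a (s i) =
    \sum_(f : {ffun 'I_N -> J}) (\prod_(i < N) lam (s i) (f i)) *: \prod_(i < N) b (f i).
  under eq_bigr do rewrite a_eq.
  by rewrite bigA_distr_bigA; apply: eq_bigr => f _; rewrite scaler_prod.
rewrite /stdp (eq_bigr (fun s : 'S_N => \sum_(f : {ffun 'I_N -> J})
    ((-1) ^+ s * \prod_(i < N) lam (s i) (f i)) *: \prod_(i < N) b (f i))); last first.
  move=> s _; rewrite prod_expand mulr_sumr; apply: eq_bigr => f _.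
  by rewrite -scalerA scaler_sign mulr_sign -scalerN; case: (odd_perm s).
rewrite exchange_big big1 // => f _; rewrite -scaler_suml.
have [i1 [i2 neq_i f_eq]] : exists i1, exists2 i2, i1 != i2 & f i1 = f i2.
  apply/injectivePn; apply: contraL small => /injectiveP/leq_card.
  by rewrite card_ord -leqNgt.
have -> : \sum_(s : 'S_N) (-1) ^+ s * \prod_(i < N) lam (s i) (f i) =
    \det (\matrix_(i, k) lam k (f i)).
  by apply: eq_bigr => s _; congr (_ * _); apply: eq_bigr => i _; rewrite mxE.
by rewrite (determinant_alternate neq_i) ?scale0r // => k; rewrite !mxE f_eq.
Qed.

Lemma stdp_matrix_eq0 (C : comNzRingType) (m N : nat) : (m.+1 * m.+1 < N)%N ->
  forall a : 'I_N -> 'M[C]_m.+1, stdp a = 0.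
Proof.
move=> large.
apply: (@stdp_eq0_of_span _ _ _ (fun ij : 'I_m.+1 * 'I_m.+1 => delta_mx ij.1 ij.2)).
  by rewrite card_prod card_ord.
by move=> A; exists (fun ij => A ij.1 ij.2); rewrite {1}(matrix_sum_delta A) pair_big.
Qed.

Lemma PI_algebra_of_stdp (K : fieldType) (R : algType K) (N : nat) :
  (forall a : 'I_N -> R, stdp a = 0) -> PI_algebra R.
Proof.
move=> stdp0.
pose word (s : 'S_N) : seq 'I_N := [seq s i | i <- index_enum 'I_N].
have word_inj : injective word.
  by move=> s t /eq_in_map st_eq; apply/permP => i; apply/st_eq/mem_index_enum.
pose f (w : seq 'I_N) : K := \sum_(s : 'S_N) (if w == word s then (-1) ^+ s else 0).
have f_word s : f (word s) = (-1) ^+ s.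
  rewrite /f (bigD1 s) //= eqxx big1 ?addr0 // => t neq_ts.
  by rewrite (inj_eq word_inj) eq_sym (negbTE neq_ts).
exists N, [seq word s | s <- index_enum 'S_N], f; split.
- by rewrite map_inj_uniq ?index_enum_uniq.
- move=> w; apply: contraR => w_notin; rewrite /f big1 // => s _.
  by case: eqP => // w_eq; rewrite w_eq map_f ?mem_index_enum in w_notin.
- by exists (word 1%g); rewrite f_word odd_perm1 expr0 oner_neq0.
- move=> a; rewrite big_map -[RHS](stdp0 a); apply: eq_bigr => s _.
  by rewrite f_word scaler_sign mulr_sign /word big_map.
Qed.

End StandardPolynomial.

Section MatrixRepresentation.
Local Open Scope ring_scope.
Variables (C : comNzRingType) (R : pzRingType) (rho : C -> R) (m : nat) (G : 'I_m.+1 -> R).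
Hypothesis rhoD : forall a b, rho (a + b) = rho a + rho b.
Hypothesis rhoM : forall a b, rho (a * b) = rho a * rho b.
Hypothesis rho1 : rho 1 = 1.
Hypothesis G_span : forall r, exists p : 'I_m.+1 -> C, r = \sum_j G j * rho (p j).
Hypothesis G_faithful : forall r, (forall j, r * G j = 0) -> r = 0.

Let rho0 : rho 0 = 0.
Proof. by apply: (@addrI _ (rho 0)); rewrite -rhoD !addr0. Qed.

Let rhoN a : rho (- a) = - rho a.
Proof. by apply: (@addrI _ (rho a)); rewrite -rhoD !subrr rho0. Qed.

Let rho_sum (I : Type) (r : seq I) (F : I -> C) :
  rho (\sum_(i <- r) F i) = \sum_(i <- r) rho (F i).
Proof. exact: (big_morph rho rhoD rho0). Qed.

Definition represents (r : R) (Phi : 'M[C]_m.+1) :=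
  forall c, r * G c = \sum_j G j * rho (Phi j c).

Lemma represents0 : represents 0 0.
Proof. by move=> c; rewrite mul0r big1 // => j _; rewrite mxE rho0 mulr0. Qed.

Lemma represents1 : represents 1 1.
Proof.
move=> c; rewrite mul1r (bigD1 c) //= big1 => [|j /negbTE neq_jc].
  by rewrite mxE eqxx rho1 mulr1 addr0.
by rewrite mxE neq_jc rho0 mulr0.
Qed.

Lemma representsD r Phi s Psi :
  represents r Phi -> represents s Psi -> represents (r + s) (Phi + Psi).
Proof.
move=> rPhi sPsi c; rewrite mulrDl rPhi sPsi -big_split.
by apply: eq_bigr => j _; rewrite mxE rhoD mulrDr.
Qed.

Lemma representsN r Phi : represents r Phi -> represents (- r) (- Phi).
Proof.
move=> rPhi c; rewrite mulNr rPhi -sumrN.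
by apply: eq_bigr => j _; rewrite mxE rhoN mulrN.
Qed.

Lemma representsM r Phi s Psi :
  represents r Phi -> represents s Psi -> represents (r * s) (Phi * Psi).
Proof.
move=> rPhi sPsi c; rewrite -mulrA sPsi mulr_sumr.
under eq_bigr do rewrite mulrA rPhi mulr_suml.
rewrite exchange_big; apply: eq_bigr => l _ /=.
rewrite mxE rho_sum mulr_sumr; apply: eq_bigr => j _.
by rewrite rhoM mulrA.
Qed.

Lemma represents_exists r : exists Phi, represents r Phi.
Proof.
have [p p_eq] : exists p : 'I_m.+1 -> 'I_m.+1 -> C,
    forall c, r * G c = \sum_j G j * rho (p c j).
  exact: (fin_all_exists (fun c => G_span (r * G c))).
by exists (\matrix_(j, c) p c j) => c; rewrite p_eq; apply: eq_bigr => j _; rewrite mxE.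
Qed.

Theorem stdp_eq0_of_representation N : (m.+1 * m.+1 < N)%N ->
  forall a : 'I_N -> R, stdp a = 0.
Proof.
move=> large a.
have [Phi aPhi] : exists Phi : 'I_N -> 'M[C]_m.+1, forall i, represents (a i) (Phi i).
  exact: (fin_all_exists (fun i => represents_exists (a i))).
have sign_rep (b : bool) : represents ((-1) ^+ b) ((-1) ^+ b).
  by case: b; [apply/representsN/represents1 | apply: represents1].
have : represents (stdp a) (stdp Phi).
  apply: (big_ind2 represents represents0 representsD) => s _.
  apply: representsM; first exact: sign_rep.
  exact: (big_ind2 represents represents1 representsM).
rewrite (stdp_matrix_eq0 large) => a_rep0; apply: G_faithful => c.
by rewrite a_rep0 big1 // => j _; rewrite mxE rho0 mulr0.
Qed.

End MatrixRepresentation.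

Section MonoidAlgebraOverCommutativeImage.
Local Open Scope ring_scope.
Variables (K : fieldType) (M : Type) (mul : M -> M -> M) (one : M).
Variables (n : nat) (a : 'X_{1..n} -> M) (I : finType) (g : I -> M).
Hypothesis a0 : a 0%MM = one.
Hypothesis aD : forall nu1 nu2, a (nu1 + nu2)%MM = mul (a nu1) (a nu2).
Hypothesis g_a_decomp : forall s, exists c nu, s = mul (g c) (a nu).
Hypothesis g_a_swap : forall c nu, exists nu', mul (g c) (a nu) = mul (a nu') (g c).
Variables (R : algType K) (e : M -> R).
Hypothesis e_alg : is_monoid_algebra mul one e.

Let e1 : e one = 1. Proof. by case: e_alg. Qed.
Let eM s t : e (mul s t) = e s * e t. Proof. by case: e_alg. Qed.

Local Notation rho := (mlin (fun nu => e (a nu))).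

Let rho1 : rho 1 = 1. Proof. by apply: mlin1; rewrite a0 e1. Qed.
Let rhoM f f' : rho (f * f') = rho f * rho f'.
Proof. by apply: mlinM => mu nu; rewrite aD eM. Qed.

Lemma span_of_mlin (A : M -> Prop) f : (forall nu, A (a nu)) -> span_of e A (rho f).
Proof.
move=> A_a; pose mu i := nth 0%MM (msupp f) i.
exists (size (msupp f)), (fun i => a (mu i)), (fun i => f@_(mu i)); split => //.
by rewrite /mlin (big_nth 0%MM) big_mkord.
Qed.

(* The module generators e (g c), together with 1: the nonempty index type gives
   a nontrivial matrix ring, and the generator 1 makes the representation
   faithful. *)
Definition gen (j : 'I_#|I|.+1) : R :=
  oapp (fun j' : 'I_#|I| => e (g (enum_val j'))) 1 (insub (val j)).

Definition gen_index (c : I) : 'I_#|I|.+1 := widen_ord (leqnSn _) (enum_rank c).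

Lemma gen_indexE c : gen (gen_index c) = e (g c).
Proof. by rewrite /gen /= valK /= enum_rankK. Qed.

Lemma gen_max : gen ord_max = 1.
Proof. by rewrite /gen insubF //= ltnn. Qed.

Lemma span_right r : exists (mm : nat) (c : 'I_mm -> I) (nu : 'I_mm -> 'X_{1..n})
  (k : 'I_mm -> K), r = \sum_(t < mm) k t *: (e (g (c t)) * e (a (nu t))).
Proof.
case: e_alg => _ _ e_span _; have [mm [s [k ->]]] := e_span r.
have decomp_s t : exists cn : I * 'X_{1..n}, s t = mul (g cn.1) (a cn.2).
  by have [c [nu ->]] := g_a_decomp (s t); exists (c, nu).
have [cn cn_eq] := fin_all_exists decomp_s.
exists mm, (fun t => (cn t).1), (fun t => (cn t).2), k.
by apply: eq_bigr => t _; rewrite cn_eq eM.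
Qed.

Lemma span_left r : exists (mm : nat) (c : 'I_mm -> I) (nu : 'I_mm -> 'X_{1..n})
  (k : 'I_mm -> K), r = \sum_(t < mm) k t *: (e (a (nu t)) * e (g (c t))).
Proof.
have [mm [c [nu [k ->]]]] := span_right r.
have [nu' nu'_eq] : exists nu' : 'I_mm -> 'X_{1..n},
    forall t, mul (g (c t)) (a (nu t)) = mul (a (nu' t)) (g (c t)).
  exact: (fin_all_exists (fun t => g_a_swap (c t) (nu t))).
exists mm, c, nu', k.
by apply: eq_bigr => t _; rewrite -!eM nu'_eq.
Qed.

Lemma gen_span_right r : exists p : 'I_#|I|.+1 -> {mpoly K[n]},
  r = \sum_j gen j * rho (p j).
Proof.
have [mm [c [nu [k ->]]]] := span_right r.
exists (fun j => \sum_(t < mm | gen_index (c t) == j) k t *: 'X_[nu t]).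
rewrite (partition_big (fun t => gen_index (c t)) predT) //=.
apply: eq_bigr => j _; rewrite mlin_sum mulr_sumr; apply: eq_bigr => t /eqP <-.
by rewrite mlinZ mlinX gen_indexE -scalerAr.
Qed.

Lemma gen_span_left r : exists p : 'I_#|I|.+1 -> {mpoly K[n]},
  r = \sum_j rho (p j) * gen j.
Proof.
have [mm [c [nu [k ->]]]] := span_left r.
exists (fun j => \sum_(t < mm | gen_index (c t) == j) k t *: 'X_[nu t]).
rewrite (partition_big (fun t => gen_index (c t)) predT) //=.
apply: eq_bigr => j _; rewrite mlin_sum mulr_suml; apply: eq_bigr => t /eqP <-.
by rewrite mlinZ mlinX gen_indexE -scalerAl.
Qed.

Lemma monoid_algebra_right_noetherian : right_noetherian R.
Proof.
move=> J J_ideal J_incr.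
apply: (@act_submodule_chain_stable K R _ _ gen (fun nu v => v * e (a nu))) => //.
- by move=> nu u v; rewrite mulrDl.
- by move=> nu k u; rewrite -scalerAl.
- by move=> nu1 nu2 u; rewrite addmC aD eM mulrA.
- move=> v; have [mm [c [nu [k ->]]]] := span_right v.
  exists mm, (fun t => gen_index (c t)), nu, k.
  by apply: eq_bigr => t _; rewrite gen_indexE.
- move=> t; have [J0 JD JM] := J_ideal t; split => [|nu u /JM //].
  by split => // k u Ju; rewrite -mulr_algr; apply: JM.
Qed.

Lemma monoid_algebra_left_noetherian : left_noetherian R.
Proof.
move=> J J_ideal J_incr.
apply: (@act_submodule_chain_stable K R _ _ gen (fun nu v => e (a nu) * v)) => //.
- by move=> nu u v; rewrite mulrDr.
- by move=> nu k u; rewrite -scalerAr.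
- by move=> nu1 nu2 u; rewrite aD eM mulrA.
- move=> v; have [mm [c [nu [k ->]]]] := span_left v.
  exists mm, (fun t => gen_index (c t)), nu, k.
  by apply: eq_bigr => t _; rewrite gen_indexE.
- move=> t; have [J0 JD JM] := J_ideal t; split => [|nu u /JM //].
  by split => // k u Ju; rewrite -mulr_algl; apply: JM.
Qed.

Lemma monoid_algebra_PI : PI_algebra R.
Proof.
apply: (@PI_algebra_of_stdp K R (#|I|.+1 * #|I|.+1).+1).
apply: (@stdp_eq0_of_representation _ R rho #|I| gen) => //.
- exact: mlinD.
- exact: gen_span_right.
- by move=> r /(_ ord_max); rewrite gen_max mulr1.
Qed.

Theorem monoid_algebra_finite_over_image (A : M -> Prop) : (forall nu, A (a nu)) ->
  [/\ finite_left_module (span_of e A), finite_right_module (span_of e A),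
      right_noetherian R, left_noetherian R & PI_algebra R].
Proof.
move=> A_a; split.
- exists #|I|.+1, gen => r; have [p ->] := gen_span_left r.
  by exists (fun j => rho (p j)); split => // j; apply: span_of_mlin.
- exists #|I|.+1, gen => r; have [p ->] := gen_span_right r.
  by exists (fun j => rho (p j)); split => // j; apply: span_of_mlin.
- exact: monoid_algebra_right_noetherian.
- exact: monoid_algebra_left_noetherian.
- exact: monoid_algebra_PI.
Qed.

End MonoidAlgebraOverCommutativeImage.

Lemma count1_eq (T : eqType) (Q : pred T) (s : seq T) a b :
  count Q s = 1 -> a \in s -> b \in s -> Q a -> Q b -> a = b.
Proof.
rewrite -size_filter => one_Q a_s b_s Qa Qb.
have: a \in filter Q s by rewrite mem_filter Qa.
have: b \in filter Q s by rewrite mem_filter Qb.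
by case: (filter Q s) one_Q => [|y [|]] //= _; rewrite !inE => /eqP -> /eqP ->.
Qed.

Section SkewCongruence.
Variables (n : nat) (rels : seq (relation n)).
Hypothesis skew : skew_type rels.

Definition lhs (r : relation n) := [:: r.1.1; r.1.2].
Definition rhs (r : relation n) := [:: r.2.1; r.2.2].

Definition opposite_sides (r : relation n) (u v : seq 'I_n) :=
  (u = lhs r /\ v = rhs r) \/ (u = rhs r /\ v = lhs r).

Definition related (u v : seq 'I_n) :=
  u = v \/ exists2 r, r \in rels & opposite_sides r u v.

Lemma rels_sides_neq r : r \in rels -> r.1.1 != r.1.2 /\ r.2.1 != r.2.2.
Proof. by case: skew => _ /allP rels_neq _ /rels_neq /andP. Qed.

Lemma rel_of_side_uniq r r' v : r \in rels -> r' \in rels ->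
  v = lhs r \/ v = rhs r -> v = lhs r' \/ v = rhs r' -> r = r'.
Proof.
move=> r_in r'_in v_r v_r'.
have [p [q [v_eq neq_pq]]] : exists p q, v = [:: p; q] /\ p != q.
  have [neq1 neq2] := rels_sides_neq r_in.
  by case: v_r => ->; [exists r.1.1, r.1.2 | exists r.2.1, r.2.2].
have [_ _ /(_ p q neq_pq) one_pq] := skew.
apply: (count1_eq one_pq r_in r'_in).
- by case: v_r; rewrite v_eq => -[-> ->]; rewrite -!surjective_pairing eqxx ?orbT.
- by case: v_r'; rewrite v_eq => -[-> ->]; rewrite -!surjective_pairing eqxx ?orbT.
Qed.

Lemma opposite_sides_sym r u v : opposite_sides r u v -> opposite_sides r v u.
Proof. by case=> -[-> ->]; [right | left]. Qed.

Lemma opposite_sides_mem r u v : opposite_sides r u v ->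
  (u = lhs r \/ u = rhs r) /\ (v = lhs r \/ v = rhs r).
Proof. by case=> -[-> ->]; split; auto. Qed.

Lemma opposite_sides_uniq r u v w :
  opposite_sides r u v -> opposite_sides r u w -> v = w.
Proof. by case=> -[-> ->] [] [eq_u ->] //; rewrite eq_u. Qed.

Lemma related_sym u v : related u v -> related v u.
Proof.
by case=> [-> | [r r_in /opposite_sides_sym]]; [left | right; exists r].
Qed.

Lemma related_partner_uniq u v w :
  related u v -> related u w -> u <> v -> u <> w -> v = w.
Proof.
case=> [//|[r r_in uv]] [//|[r' r'_in uw]] _ _.
have eq_rr' : r = r'.
  exact: rel_of_side_uniq r_in r'_in (opposite_sides_mem uv).1 (opposite_sides_mem uw).1.
by rewrite eq_rr' in uv; apply: opposite_sides_uniq uv uw.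
Qed.

Lemma related_trans u v w : related u v -> related v w -> related u w.
Proof.
move=> uv vw; have [<- // | /eqP neq_vu] := eqVneq v u.
have [<- // | /eqP neq_vw] := eqVneq v w.
by left; apply: related_partner_uniq (related_sym uv) vw neq_vu neq_vw.
Qed.

Lemma cong_size u v : cong rels u v -> size u = size v.
Proof.
by elim=> [// | ? ? _ -> // | ? ? ? _ -> _ -> // | ? ? r _]; rewrite !size_cat.
Qed.

Lemma cong_deg2 u v : cong rels u v -> size u = 2 -> related u v.
Proof.
elim=> {u v} [w _ | u v uv IH size_u | u v w uv IHuv vw IHvw size_u | u v r r_in].
- by left.
- by apply/related_sym/IH; rewrite (cong_size uv).
- by apply: (related_trans (IHuv size_u)); apply: IHvw; rewrite -(cong_size uv).
- rewrite !size_cat /= !addnS => /eqP; rewrite !eqSS addn_eq0 size_eq0 size_eq0.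
  by case/andP => /eqP -> /eqP ->; right; exists r => //; left.
Qed.

Lemma cong_nseq u v k i : cong rels u v -> (u = nseq k i <-> v = nseq k i).
Proof.
elim=> {u v} [// | u v _ IH | u v w _ IHuv _ IHvw | u v r r_in].
- by split => /IH.
- by split => [/IHuv/IHvw | /IHvw/IHuv].
have side_not_nseq p q : p != q -> u ++ [:: p; q] ++ v <> nseq k i.
  move=> neq_pq eq_nseq.
  have: p \in nseq k i by rewrite -eq_nseq !mem_cat !inE eqxx orbT.
  have: q \in nseq k i by rewrite -eq_nseq !mem_cat !inE eqxx !orbT.
  rewrite !mem_nseq => /andP [_ /eqP eq_q] /andP [_ /eqP eq_p].
  by rewrite eq_p eq_q eqxx in neq_pq.
have [neq1 neq2] := rels_sides_neq r_in.
by split => [/(side_not_nseq _ _ neq1) | /(side_not_nseq _ _ neq2)].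
Qed.

End SkewCongruence.

Lemma count_ordered_word (n : nat) (b : 'I_n -> nat) j :
  count_mem j (ordered_word b) = b j.
Proof.
rewrite /ordered_word count_flatten -map_comp sumnE big_map big_enum /=.
rewrite (bigD1 j) //= count_nseq /= eqxx mul1n big1 ?addn0 // => i /negbTE neq_ij.
by rewrite count_nseq /= neq_ij.
Qed.

Lemma dvdn_prod_term (I : finType) (F : I -> nat) i : F i %| \prod_j F j.
Proof. by rewrite (bigD1 i) //= dvdn_mulr. Qed.

Section SkewMonoid.
Variables (n : nat) (M : Type) (mul : M -> M -> M) (one : M) (x : 'I_n -> M).
Hypothesis monoid_M : is_monoid mul one.

Local Notation ev := (eval_word mul one x).

Let mulA : associative mul. Proof. by case: monoid_M. Qed.
Let mul1m : left_id one mul. Proof. by case: monoid_M. Qed.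
Let mulm1 : right_id one mul. Proof. by case: monoid_M. Qed.

Lemma eval_word_cat u v : ev (u ++ v) = mul (ev u) (ev v).
Proof. by elim: u => [|i u IH] /=; rewrite ?mul1m // IH mulA. Qed.

Lemma eval_word2 i j : ev [:: i; j] = mul (x i) (x j).
Proof. by rewrite /= mulm1. Qed.

Definition xpow (j : 'I_n) (k : nat) : M := ev (nseq k j).

Lemma xpowD j k l : xpow j (k + l) = mul (xpow j k) (xpow j l).
Proof. by rewrite /xpow nseqD eval_word_cat. Qed.

Lemma xpowSr j k : xpow j k.+1 = mul (xpow j k) (x j).
Proof. by rewrite -addn1 xpowD /xpow /= mulm1. Qed.

Lemma cyclic_condition_data : cyclic_condition mul x ->
  exists (k : 'I_n -> 'I_n -> nat) (T W : 'I_n -> 'I_n -> 'I_n),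
  [/\ forall i j, 0 < k i j,
      forall i j, mul (xpow j (k i j)) (x i) = mul (x i) (xpow (T i j) (k i j))
    & forall i j, mul (x j) (x (W i j)) = mul (x i) (x (T i j))].
Proof.
move=> cyclic.
have data (ij : 'I_n * 'I_n) : exists ktw : nat * 'I_n * 'I_n,
    [/\ 0 < ktw.1.1, mul (xpow ij.2 ktw.1.1) (x ij.1) = mul (x ij.1) (xpow ktw.1.2 ktw.1.1)
      & mul (x ij.2) (x ktw.2) = mul (x ij.1) (x ktw.1.2)].
  case: ij => i j; have [k [z [y' [k_gt0 z0 chain last]]]] := cyclic i j.
  have chain_pow t : t < k -> mul (xpow j t) (x (z 0)) = mul (x (z t)) (xpow y' t).
    elim: t => [|t IH] lt_tk; first by rewrite /= mul1m mulm1.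
    by rewrite /xpow /= -mulA IH ?(ltnW lt_tk) // mulA chain // -mulA.
  exists (k, y', z k.-1); split => //=.
  have := chain_pow k.-1; rewrite ltn_predL => /(_ k_gt0) chain_k.
  by rewrite -(prednK k_gt0) /xpow /= -mulA -z0 chain_k z0 mulA last -mulA.
have [D D_spec] := fin_all_exists data.
exists (fun i j => (D (i, j)).1.1), (fun i j => (D (i, j)).1.2), (fun i j => (D (i, j)).2).
by split=> i j; case: (D_spec (i, j)).
Qed.

Section Presentation.
Variable rels : seq (relation n).
Hypothesis skew : skew_type rels.
Hypothesis presents_x : presents mul one rels x.

Lemma eval_word_cong u v : ev u = ev v -> cong rels u v.
Proof. by case: presents_x => _ /(_ u v) []. Qed.

Lemma mul_x_related i j i' j' :
  mul (x i) (x j) = mul (x i') (x j') -> related rels [:: i; j] [:: i'; j'].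
Proof. by rewrite -!eval_word2 => /eval_word_cong/(cong_deg2 skew); apply. Qed.

Lemma mul_x_square i j j' : mul (x j) (x j') = mul (x i) (x i) -> j = i /\ j' = i.
Proof.
by rewrite -!eval_word2 => /eval_word_cong /(cong_nseq skew 2 i) [_ /(_ erefl)] [-> ->].
Qed.

Variables (k : 'I_n -> 'I_n -> nat) (T W : 'I_n -> 'I_n -> 'I_n).
Hypothesis k_gt0 : forall i j, 0 < k i j.
Hypothesis xpow_swap : forall i j,
  mul (xpow j (k i j)) (x i) = mul (x i) (xpow (T i j) (k i j)).
Hypothesis x_swap : forall i j, mul (x j) (x (W i j)) = mul (x i) (x (T i j)).

Lemma T_diag i : T i i = i.
Proof.
have := xpow_swap i i; rewrite -xpowSr /xpow -[mul _ _]/(ev (i :: _)).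
move=> /eval_word_cong /(cong_nseq skew (k i i).+1 i) [/(_ erefl) + _].
by case: (k i i) (k_gt0 i i) => //= k' _ [].
Qed.

Lemma T_inj i : injective (T i).
Proof.
have diag j j' : T i j = T i j' -> j = i -> j' = i.
  move=> T_eq eq_j; have := x_swap i j'; rewrite -T_eq eq_j T_diag.
  by case/mul_x_square.
have partner j : j != i ->
    related rels [:: i; T i j] [:: j; W i j] /\ [:: i; T i j] <> [:: j; W i j].
  move=> neq_ji; split; first by apply/related_sym/mul_x_related; rewrite x_swap.
  by case=> eq_ij; rewrite eq_ij eqxx in neq_ji.
move=> j1 j2 T_eq.
have [eq1 | /partner [rel1 neq1]] := eqVneq j1 i; first by rewrite eq1 (diag j1 j2).
have [eq2 | /partner [rel2 neq2]] := eqVneq j2 i.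
  by rewrite eq2 (diag j2 j1 (esym T_eq) eq2).
by rewrite T_eq in rel1 neq1; case: (related_partner_uniq skew rel1 rel2 neq1 neq2).
Qed.

End Presentation.

Section Period.
Variables (k : 'I_n -> 'I_n -> nat) (T : 'I_n -> 'I_n -> 'I_n).
Hypothesis k_gt0 : forall i j, 0 < k i j.
Hypothesis xpow_swap : forall i j,
  mul (xpow j (k i j)) (x i) = mul (x i) (xpow (T i j) (k i j)).
Hypothesis T_injective : forall i, injective (T i).

Definition Tperm (i : 'I_n) : {perm 'I_n} := perm (@T_injective i).

Definition period : nat :=
  (\prod_(ij : 'I_n * 'I_n) k ij.1 ij.2 * \prod_i #[Tperm i]%g)%N.

Lemma period_gt0 : 0 < period.
Proof. by rewrite muln_gt0 !prodn_gt0 // => *; rewrite ?order_gt0 ?k_gt0. Qed.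

Lemma Tperm_period i : (Tperm i ^+ period)%g = 1%g.
Proof.
have /dvdnP [q ->] : #[Tperm i]%g %| period.
  by apply/dvdn_mull/(dvdn_prod_term (fun i => #[Tperm i]%g)).
by rewrite mulnC expgM expg_order expg1n.
Qed.

Lemma xpow_period_swap i j : mul (xpow j period) (x i) = mul (x i) (xpow (T i j) period).
Proof.
have /dvdnP [q ->] : k i j %| period.
  by apply/dvdn_mulr/(dvdn_prod_term (fun ij : 'I_n * 'I_n => k ij.1 ij.2) (i, j)).
elim: q => [|q IH]; first by rewrite mul0n /= mul1m mulm1.
by rewrite mulSn !xpowD -mulA IH mulA xpow_swap -mulA.
Qed.

Lemma xpow_period_swapV i j :
  mul (x i) (xpow j period) = mul (xpow ((Tperm i)^-1 j)%g period) (x i).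
Proof. by rewrite xpow_period_swap -[T i _]permE permKV. Qed.

Lemma xpow_period_conj i j l :
  mul (xpow j period) (xpow i l) = mul (xpow i l) (xpow ((Tperm i ^+ l)%g j) period).
Proof.
elim: l j => [|l IH] j; first by rewrite expg0 perm1 /= mul1m mulm1.
rewrite /xpow /= -/(xpow i l) mulA xpow_period_swap -mulA IH mulA.
by rewrite expgS permM permE.
Qed.

Lemma xpow_period_comm i j :
  mul (xpow j period) (xpow i period) = mul (xpow i period) (xpow j period).
Proof. by rewrite xpow_period_conj Tperm_period perm1. Qed.

Lemma xpow_period_word j v :
  exists j', mul (xpow j period) (ev v) = mul (ev v) (xpow j' period).
Proof.
elim: v j => [|i v IH] j /=; first by exists j; rewrite mul1m mulm1.
have [j' eq_j'] := IH (T i j); exists j'.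
by rewrite mulA xpow_period_swap -mulA eq_j' mulA.
Qed.

Lemma word_xpow_period j v :
  exists j', mul (ev v) (xpow j period) = mul (xpow j' period) (ev v).
Proof.
elim/last_ind: v j => [|v i IH] j /=; first by exists j; rewrite mul1m mulm1.
rewrite -cats1 eval_word_cat /= mulm1 -mulA xpow_period_swapV mulA.
have [j' eq_j'] := IH ((Tperm i)^-1 j)%g; exists j'.
by rewrite eq_j' -mulA.
Qed.

Definition apow (w : seq 'I_n) : M := ev (flatten [seq nseq period i | i <- w]).

Lemma apow_cons i w : apow (i :: w) = mul (xpow i period) (apow w).
Proof. by rewrite /apow /= eval_word_cat. Qed.

Lemma apow_cat u w : apow (u ++ w) = mul (apow u) (apow w).
Proof. by rewrite /apow map_cat flatten_cat eval_word_cat. Qed.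

Lemma apow_seq1 i : apow [:: i] = xpow i period.
Proof. by rewrite apow_cons /= mulm1. Qed.

Lemma xpow_period_apow i w : mul (xpow i period) (apow w) = mul (apow w) (xpow i period).
Proof.
elim: w => [|j w IH]; first by rewrite /= mul1m mulm1.
by rewrite apow_cons mulA xpow_period_comm -mulA IH mulA.
Qed.

Lemma apow_comm u w : mul (apow u) (apow w) = mul (apow w) (apow u).
Proof.
elim: u => [|i u IH]; first by rewrite /= mul1m mulm1.
by rewrite apow_cons -mulA IH mulA xpow_period_apow mulA.
Qed.

Lemma apow_word w v : exists w', mul (apow w) (ev v) = mul (ev v) (apow w').
Proof.
elim: w => [|i w [w' IH]]; first by exists [::]; rewrite /= mul1m mulm1.
have [j eq_j] := xpow_period_word i v.
by exists (j :: w'); rewrite !apow_cons -mulA IH mulA eq_j -mulA.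
Qed.

Lemma word_apow w v : exists w', mul (ev v) (apow w) = mul (apow w') (ev v).
Proof.
elim/last_ind: w => [|w i [w' IH]]; first by exists [::]; rewrite /= mul1m mulm1.
have [j eq_j] := word_xpow_period i v.
exists (rcons w' j); rewrite -!cats1 !apow_cat !apow_seq1.
by rewrite mulA IH -mulA eq_j mulA.
Qed.

Lemma xpow_mul_period i q : xpow i (q * period) = apow (nseq q i).
Proof. by elim: q => [|q IH] //; rewrite mulSn xpowD IH apow_cons. Qed.

Lemma flatten_nseq_mod_period (L : seq 'I_n) (b : 'I_n -> nat) : exists w,
  ev (flatten [seq nseq (b i) i | i <- L]) =
  mul (ev (flatten [seq nseq (b i %% period) i | i <- L])) (apow w).
Proof.
elim: L => [|i L [w IH]] /=; first by exists [::]; rewrite mulm1.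
have [w' eq_w'] := apow_word (nseq (b i %/ period) i)
  (flatten [seq nseq (b i %% period) i | i <- L]).
exists (w' ++ w); rewrite !eval_word_cat IH -[ev (nseq (b i) i)]/(xpow i (b i)).
rewrite {1}(divn_eq (b i) period) addnC xpowD xpow_mul_period apow_cat.
by rewrite -!mulA; congr (mul _ _); rewrite !mulA eq_w'.
Qed.

Lemma apow_perm w1 w2 : perm_eq w1 w2 -> apow w1 = apow w2.
Proof.
move=> w12; apply: (catCA_perm_ind (P := fun w => apow w1 = apow w)) w12 erefl.
by move=> s1 s2 s3 ->; rewrite !apow_cat !mulA (apow_comm s1 s2).
Qed.

Definition amono (nu : 'X_{1..n}) : M := apow (ordered_word (fun i => nu i)).

Lemma apow_amono w : exists nu, apow w = amono nu.
Proof.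
exists [multinom count_mem i w | i < n]; apply: apow_perm.
by apply/allP => j _ /=; rewrite count_ordered_word mnmE.
Qed.

Lemma amono0 : amono 0%MM = one.
Proof.
rewrite /amono (@apow_perm _ [::]) //.
by apply/allP => j _ /=; rewrite count_ordered_word mnm0E.
Qed.

Lemma amonoD nu1 nu2 : amono (nu1 + nu2)%MM = mul (amono nu1) (amono nu2).
Proof.
rewrite /amono -apow_cat; apply: apow_perm.
by apply/allP => j _ /=; rewrite count_cat !count_ordered_word mnmDE.
Qed.

Definition cmono (c : {ffun 'I_n -> 'I_period}) : M := ev (ordered_word (fun i => c i)).

Lemma cmono_amono_swap c nu :
  exists nu', mul (cmono c) (amono nu) = mul (amono nu') (cmono c).
Proof.
have [w eq_w] := word_apow (ordered_word (fun i => nu i)) (ordered_word (fun i => c i)).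
by have [nu' eq_nu'] := apow_amono w; exists nu'; rewrite /cmono /amono eq_w eq_nu'.
Qed.

Lemma cmono_amono_decomp : (forall s, exists b : 'I_n -> nat, s = ev (ordered_word b)) ->
  forall s, exists c nu, s = mul (cmono c) (amono nu).
Proof.
move=> normal_form s; have [b ->] := normal_form s.
have [w ->] := flatten_nseq_mod_period (enum 'I_n) b.
have [nu ->] := apow_amono w.
exists [ffun i => Ordinal (ltn_pmod (b i) period_gt0)], nu; congr (mul _ _).
by rewrite /cmono /ordered_word; congr (ev (flatten _)); apply: eq_map => i; rewrite ffunE.
Qed.

End Period.
End SkewMonoid.

Theorem proposition2p2 (K : fieldType) (n : nat) (rels : seq (relation n))
  (M : Type) (mul : M -> M -> M) (one : M) (x : 'I_n -> M) :
  is_monoid mul one ->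
  skew_type rels ->
  presents mul one rels x ->
  cyclic_condition mul x ->
  (forall s : M, exists a : 'I_n -> nat, s = eval_word mul one x (ordered_word a)) ->
  exists p : nat,
    let A : M -> Prop := fun s =>
      exists w : seq 'I_n, s = eval_word mul one x (flatten [seq nseq p i | i <- w]) in
    let C : M -> Prop := fun s =>
      exists b : 'I_n -> nat, (forall i, (b i < p)%N) /\
        s = eval_word mul one x (ordered_word b) in
    [/\ (0 < p)%N,
        (forall a b, A a -> A b -> mul a b = mul b a),
        (forall s : M, exists c a, [/\ C c, A a & s = mul c a]),
        (forall c, C c ->
           (forall a, A a -> exists a', A a' /\ mul c a = mul a' c) /\
           (forall a, A a -> exists a', A a' /\ mul a c = mul c a')) &
        forall (R : algType K) (e : M -> R), is_monoid_algebra mul one e ->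
          [/\ finite_left_module (span_of e A), finite_right_module (span_of e A),
              right_noetherian R, left_noetherian R & PI_algebra R]].
Proof.
move=> monoid_M skew presents_x cyclic normal_form.
have [k [T [W [k_gt0 xpow_swap x_swap]]]] := cyclic_condition_data monoid_M cyclic.
have T_injective := T_inj monoid_M skew presents_x k_gt0 xpow_swap x_swap.
pose p := period k T_injective; pose apowT := apow mul one x k T_injective.
exists p => A C; split.
- exact: period_gt0.
- by move=> _ _ [u ->] [w ->]; apply: (apow_comm monoid_M xpow_swap).
- move=> s; have [b ->] := normal_form s.
  have [w ->] := flatten_nseq_mod_period monoid_M xpow_swap T_injective (enum 'I_n) b.
  exists (eval_word mul one x (ordered_word (fun i => b i %% p))), (apowT w).
  split; [exists (fun i => b i %% p) | exists w |] => //.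
  by split => // i; rewrite ltn_pmod ?period_gt0.
- move=> _ [b [_ ->]]; split => _ [w ->].
  + have [w' eq_w'] := word_apow monoid_M xpow_swap T_injective w (ordered_word b).
    by exists (apowT w'); split => //; exists w'.
  + have [w' eq_w'] := apow_word monoid_M xpow_swap T_injective w (ordered_word b).
    by exists (apowT w'); split => //; exists w'.
- move=> R e e_alg; apply: (monoid_algebra_finite_over_image (K := K)
    (amono0 monoid_M xpow_swap T_injective) (amonoD monoid_M xpow_swap T_injective)
    (cmono_amono_decomp monoid_M k_gt0 xpow_swap T_injective normal_form)
    (cmono_amono_swap monoid_M xpow_swap (T_injective := T_injective)) e_alg).
  by move=> nu; exists (ordered_word (fun i => nu i)).
Qed.
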